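(* Let $S$ be a sticky tree with $n$ edges ($n\ge 1$). If the Tamari interval $[\mathrm{D}(S),\mathrm{E}(S)]$ is synchronized, then every non-root node of $S$ that is not a leaf is primary.
   Context: Sticky trees: a plane tree is a rooted tree in which the children of every node are linearly ordered (left to right). The root has depth $0$, a child of a node of depth $d$ has depth $d+1$; a leaf is a node without children. The prefix order is: the root, followed by the prefix order of the subtree of its leftmost child, then of its second child, and so on. $S_u$ denotes the subtree rooted at $u$. A sticky tree is a plane tree $S$ with node set $V$ and a labeling $\ell:V\to\mathbb{N}$ such that: (1) every node $u$ of depth $d$ has $0\le\ell(u)\le d$; (2) every node $u$ of depth $d>0$ has some $v\in S_u$ (possibly $v=u$) with $\ell(v)<d$; (3) for every node $u$ of depth $d$, if some $v\in S_u$ has $\ell(v)=d$, then every node of $S_u$ (including $u$) preceding $v$ in prefix order has label at least $d$. A non-root node is primary if its label equals its depth. The certificate of a non-root node $u$ of depth $d$ is the first node, in prefix order, of $S_u$ whose label is $<d$. The certificate-counting function $c:V\to\mathbb{N}$ assigns to each node $w$ the number of non-root nodes whose certificate is $w$. The words: $\mathrm{E}(S)$ is the word in $\{u,d\}$ obtained by the depth-first traversal of $S$ from the root visiting children left to right, writing $u$ for each move from a node to a child and $d$ for each move back to the parent. If $v_1,\dots,v_n$ are the non-root nodes of $S$ in prefix order, $\mathrm{D}(S)=u\,d^{c(v_1)}\,u\,d^{c(v_2)}\cdots u\,d^{c(v_n)}$. These are Dyck paths of length $2n$ (words with $n$ letters $u$ and $n$ letters $d$, every prefix having at least as many $u$'s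 as $d$'s), and $[\mathrm{D}(S),\mathrm{E}(S)]$ is a Tamari interval. Synchronized intervals: the type of a Dyck path $D$ of length $2n$ is the word $w_1\cdots w_{n-1}$ over $\{N,E\}$ with $w_i=N$ if the $i$-th letter $u$ of $D$ is immediately followed by a letter $d$, and $w_i=E$ otherwise. A Tamari interval $[D_1,D_2]$ is synchronized if $D_1$ and $D_2$ have the same type. *)

From mathcomp Require Import all_boot.
Set Implicit Arguments. Unset Strict Implicit. Unset Printing Implicit Defensive.

(* A labeled plane tree: a node carries a label (the labeling l) and the
   ordered (left-to-right) list of its children. *)
Inductive ltree := LNode of nat & seq ltree.

Fixpoint tsize (t : ltree) : nat :=
  let: LNode _ ts := t in (sumn (map tsize ts)).+1.

(* Nodes listed in prefix order; each node is recorded as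
   (depth, label, number of nodes of its subtree). The root of the whole tree
   has depth 0 (argument d is the depth of the current subtree's root). *)
Fixpoint pre (d : nat) (t : ltree) : seq (nat * nat * nat) :=
  let: LNode l ts := t in (d, l, tsize t) :: flatten (map (pre d.+1) ts).

(* Nodes of S are identified with their index in prefix order:
   0 is the root, 1..(nnodes S - 1) are the non-root nodes.
   The subtree S_u of the node of index i occupies exactly the indices
   i, i+1, ..., i + ssize S i - 1, in prefix order. *)
Definition nnodes (S : ltree) : nat := size (pre 0 S).
Definition info (S : ltree) (i : nat) : nat * nat * nat := nth (0, 0, 0) (pre 0 S) i.
Definition depth (S : ltree) (i : nat) : nat := (info S i).1.1.
Definition label (S : ltree) (i : nat) : nat := (info S i).1.2.
Definition ssize (S : ltree) (i : nat) : nat := (info S i).2.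
Definition in_sub (S : ltree) (i j : nat) : bool := (i <= j) && (j < i + ssize S i).

Definition is_leaf (S : ltree) (i : nat) : bool := ssize S i == 1.
Definition is_root (S : ltree) (i : nat) : bool := i == 0.

Definition sticky (S : ltree) : Prop :=
  (forall i, i < nnodes S -> label S i <= depth S i) /\
  (forall i, i < nnodes S -> 0 < depth S i ->
     exists j, in_sub S i j /\ label S j < depth S i) /\
  (forall i j, i < nnodes S -> in_sub S i j -> label S j = depth S i ->
     forall k, i <= k < j -> depth S i <= label S k).

Definition primary (S : ltree) (i : nat) : Prop :=
  ~~ is_root S i /\ label S i = depth S i.

Definition cert (S : ltree) (i : nat) : nat :=
  head 0 [seq j <- iota i (ssize S i) | label S j < depth S i].

Definition ccount (S : ltree) (w : nat) : nat :=
  count (fun i => cert S i == w) (iota 1 (nnodes S).-1).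

(* Words over {u,d}: u = true, d = false. *)
Definition Dword (S : ltree) : seq bool :=
  flatten [seq true :: nseq (ccount S i) false | i <- iota 1 (nnodes S).-1].

Fixpoint Eword (t : ltree) : seq bool :=
  let: LNode _ ts := t in
  flatten (map (fun s => true :: rcons (Eword s) false) ts).

(* type of a Dyck path of length 2n: word w_1..w_{n-1} over {N,E},
   encoded N = true, E = false; w_i = N iff the i-th u is immediately
   followed by d. *)
Definition dyck_type (w : seq bool) : seq bool :=
  take (count id w).-1
    [seq ~~ nth true w p.+1 | p <- iota 0 (size w) & nth false w p].

Definition synchronized (D1 D2 : seq bool) : Prop := dyck_type D1 = dyck_type D2.

(* A node that is not primary has label smaller than its depth, so it is its
   own certificate and c(u) > 0: in D(S) the letter u created for it is
   immediately followed by a d, i.e. it contributes a letter N to the type.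
   In E(S) the letter u entering a node is followed by d exactly when that
   node is a leaf, so an internal node contributes a letter E.  An internal
   node is never the last node in prefix order, so both letters lie inside
   the type, and synchronization forces every internal node to be primary. *)
From Pilot Require Import Defs.
From mathcomp Require Import all_boot.
From Stdlib Require List.

Section NestedInduction.

Variable P : ltree -> Prop.
Hypothesis P_node : forall l ts, List.Forall P ts -> P (LNode l ts).

Fixpoint ltree_nested_ind (t : ltree) : P t :=
  let: LNode l ts := t in
  @P_node l ts ((fix all_children ts : List.Forall P ts :=
    if ts is s :: ss then List.Forall_cons s (ltree_nested_ind s) (all_children ss)
    else List.Forall_nil P) ts).

End NestedInduction.

Definition peaks (w : seq bool) : seq bool :=
  [seq ~~ nth true w p.+1 | p <- iota 0 (size w) & nth false w p].

Lemma dyck_typeE w : dyck_type w = take (count id w).-1 (peaks w).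
Proof. by []. Qed.

Lemma peaks_cons a w :
  peaks (a :: w) = if a then ~~ nth true w 0 :: peaks w else peaks w.
Proof.
rewrite /peaks /= -[1]addn0 iotaDl filter_map.
by case: a => /=; rewrite -map_comp.
Qed.

Lemma peaks_nseq_false c w : peaks (nseq c false ++ w) = peaks w.
Proof. by elim: c => //= c IH; rewrite peaks_cons. Qed.

Lemma size_peaks w : size (peaks w) = count id w.
Proof. by elim: w => // a w IH; rewrite peaks_cons; case: a => /=; rewrite IH. Qed.

Lemma peaks_flatten_nseq (T : Type) (c : T -> nat) xs :
  peaks (flatten [seq true :: nseq (c x) false | x <- xs]) = [seq 0 < c x | x <- xs].
Proof.
elim: xs => //= x xs IH; rewrite peaks_cons nth_cat size_nseq peaks_nseq_false IH.
by case: (c x) => //=; case: xs {IH}.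
Qed.

Definition leaf_info (x : nat * nat * nat) : bool := x.2 == 1.

Lemma tsize_gt0 t : 0 < Defs.tsize t.
Proof. by case: t. Qed.

Lemma Eword_head (t : ltree) w :
  ~~ nth true (Eword t ++ false :: w) 0 = (Defs.tsize t == 1).
Proof. by case: t => l [|s ss] //=; rewrite eqSS addn_eq0 eqn0Ngt tsize_gt0. Qed.

Lemma peaks_Eword_cat t d w :
  peaks (Eword t ++ w) = map leaf_info (behead (pre d t)) ++ peaks w.
Proof.
elim/ltree_nested_ind: t d w => l ts children d /=.
elim: children => //= s ss IHs _ IHss w.
rewrite -catA cat_rcons peaks_cons Eword_head (IHs d.+1) peaks_cons /= IHss map_cat catA.
by case: s {IHs}.
Qed.

Lemma all_pre_size_gt0 t d : all (fun x => 0 < x.2) (pre d t).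
Proof.
elim/ltree_nested_ind: t d => l ts children d /=.
by elim: children => //= s ss IHs _ IHss; rewrite all_cat IHs.
Qed.

Lemma ssize_gt0 S i : i < nnodes S -> 0 < ssize S i.
Proof. exact: (all_nthP (0, 0, 0) (all_pre_size_gt0 S 0)). Qed.

Lemma leaf_info_last_pre t d x : leaf_info (last x (pre d t)).
Proof.
elim/ltree_nested_ind: t d x => l ts children d x /=.
suff : forall y, (ts = [::] -> leaf_info y) -> leaf_info (last y (flatten (map (pre d.+1) ts))).
  by apply => ->.
elim: children => [|s ss leaf_s _ IHss] y leaf_y /=; first exact: leaf_y.
by rewrite last_cat; apply: IHss => _; apply: leaf_s.
Qed.

Lemma is_leaf_last S : is_leaf S (nnodes S).-1.
Proof. by rewrite /is_leaf /ssize /info nth_last; apply: leaf_info_last_pre. Qed.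

Lemma peaks_Dword S : peaks (Dword S) = [seq 0 < ccount S i | i <- iota 1 (nnodes S).-1].
Proof. exact: peaks_flatten_nseq. Qed.

Lemma peaks_Eword S : peaks (Eword S) = [seq is_leaf S i | i <- iota 1 (nnodes S).-1].
Proof.
rewrite -[Eword S]cats0 (peaks_Eword_cat _ 0) cats0.
rewrite -(mkseq_nth (0, 0, 0) (behead (pre 0 S))) /mkseq -map_comp size_behead.
rewrite -[1]addn0 iotaDl -map_comp; apply: eq_map => k /=.
by rewrite nth_behead.
Qed.

Lemma synchronized_ccount_leaf S i :
  synchronized (Dword S) (Eword S) -> 0 < i < (nnodes S).-1 ->
  (0 < ccount S i) = is_leaf S i.
Proof.
move=> sync /andP[i_gt0 i_lt]; move: sync.
rewrite /synchronized !dyck_typeE -!size_peaks peaks_Dword peaks_Eword.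
rewrite !size_map size_iota => /(congr1 (nth false ^~ i.-1)).
have i_pred_lt_pred : i.-1 < (nnodes S).-1.-1 by rewrite -ltnS prednK // (leq_trans i_lt) ?leqSpred.
have i_pred_lt : i.-1 < (nnodes S).-1 := leq_ltn_trans (leq_pred i) i_lt.
by rewrite !nth_take // !(nth_map 0) ?size_iota // nth_iota // add1n prednK.
Qed.

Lemma cert_self S i : i < nnodes S -> label S i < depth S i -> cert S i = i.
Proof.
move=> /ssize_gt0; rewrite /cert; case: (ssize S i) => //= m _ lt_label.
by rewrite lt_label.
Qed.

Lemma ccount_gt0_cert_self S i : 0 < i < nnodes S -> cert S i = i -> 0 < ccount S i.
Proof.
move=> /andP[i_gt0 i_lt] cert_i; rewrite /ccount -has_count; apply/hasP.
by exists i; rewrite ?cert_i // mem_iota i_gt0 add1n prednK // (leq_ltn_trans _ i_lt).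
Qed.

Theorem mainTheorem12 (S : ltree) (n : nat) :
  sticky S -> nnodes S = n.+1 -> 1 <= n ->
  synchronized (Dword S) (Eword S) ->
  forall i, i < nnodes S -> ~~ is_root S i -> ~~ is_leaf S i -> primary S i.
Proof.
move=> [label_le _] _ _ sync i i_lt not_root not_leaf; split => //.
apply/eqP; rewrite eqn_leq label_le //= leqNgt; apply/negP => lt_label.
have i_gt0 : 0 < i by rewrite lt0n.
have i_lt_last : i < (nnodes S).-1.
  rewrite ltn_neqAle -ltnS prednK ?i_lt ?andbT //; last exact: leq_ltn_trans i_lt.
  by apply: contraNneq not_leaf => ->; apply: is_leaf_last.
move: not_leaf; rewrite -(synchronized_ccount_leaf S i sync) ?i_gt0 //.
by rewrite ccount_gt0_cert_self ?i_gt0 // cert_self.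
Qed.
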